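(* Let $(\mathcal A,\Delta)$ be a weak bigraded Batalin-Vilkovisky algebra with bigraded Gerstenhaber bracket $[\cdot,\cdot]$ generated by $\Delta$, and let $\delta$ be an $R$-linear operator on $\mathcal A$ of bidegree $(1,0)$ which is a derivation of degree $1$ of the bigraded $R$-algebra $\mathcal A$. Then the following are equivalent: (i) $\delta[x,y]=[\delta x,y]-(-1)^{|x|}[x,\delta y]$ for all homogeneous $x,y\in\mathcal A$; (ii) the graded commutator $[\delta,\Delta]=\delta\Delta+\Delta\delta$ is a derivation of degree $0$ of the bigraded algebra $\mathcal A$, i.e. $[\delta,\Delta](ab)=([\delta,\Delta]a)b+a([\delta,\Delta]b)$ for all $a,b\in\mathcal A$.
   Context: $R$ is a commutative ring. A bigraded Gerstenhaber algebra is a bigraded commutative $R$-algebra $\mathcal A$ (signs governed by the total degree $|\cdot|$, the sum of the two degrees) with an $R$-bilinear bracket of bidegree $(0,-1)$ which becomes a bigraded Lie bracket when the second degree is lowered by one, such that for $a$ of bidegree $(p,q)$, $[a,\cdot]$ is a derivation of bidegree $(p,q-1)$. An $R$-linear operator $\Delta$ of bidegree $(0,-1)$ generates the bracket if $[a,b]=(-1)^{|a|}\big(\Delta(ab)-(\Delta a)b-(-1)^{|a|}a(\Delta b)\big)$ for all homogeneous $a,b$. A weak bigraded Batalin-Vilkovisky algebra is a bigraded Gerstenhaber algebra together with such a generator. *)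

From mathcomp Require Import all_boot all_order all_algebra.
Set Implicit Arguments. Unset Strict Implicit. Unset Printing Implicit Defensive.
Import GRing.Theory.
Local Open Scope ring_scope.

Definition ksgn (z : int) : int := (-1) ^+ `|z|%N.

Section BV.
Variables (R : comPzRingType) (A : lalgType R).
(* H p q x  <->  x is homogeneous of bidegree (p,q); total degree p+q. *)
Variable H : int -> int -> A -> Prop.

Definition homog (x : A) := exists p q, H p q x.

Definition rlinear (f : A -> A) : Prop :=
  forall (c : R) (u v : A), f (c *: u + v) = c *: f u + f v.

Definition bigraded_comm_algebra : Prop :=
  [/\ (forall p q, H p q 0 /\
         forall (c : R) u v, H p q u -> H p q v -> H p q (c *: u + v)),
      (forall a : A, exists s : seq ((int * int) * A),
           (forall i, i \in s -> H i.1.1 i.1.2 i.2) /\ a = \sum_(i <- s) i.2),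
      (forall s : seq ((int * int) * A), uniq (map fst s) ->
           (forall i, i \in s -> H i.1.1 i.1.2 i.2) ->
           \sum_(i <- s) i.2 = 0 -> forall i, i \in s -> i.2 = 0),
      H 0 0 1 /\
      (forall p q p' q' x y, H p q x -> H p' q' y -> H (p + p') (q + q') (x * y))
    & (forall p q p' q' x y, H p q x -> H p' q' y ->
         x * y = (y * x) *~ ksgn ((p + q) * (p' + q')))].

Definition gerstenhaber_bracket (br : A -> A -> A) : Prop :=
  [/\ (forall x, rlinear (br x)) /\ (forall y, rlinear (br^~ y)),
      (forall p q p' q' x y, H p q x -> H p' q' y ->
         H (p + p') (q + q' - 1) (br x y)),
      (forall p q p' q' x y, H p q x -> H p' q' y ->
         br x y = - (br y x *~ ksgn ((p + q - 1) * (p' + q' - 1)))),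
      (forall p q p' q' x y z, H p q x -> H p' q' y -> homog z ->
         br x (br y z) = br (br x y) z +
                         br y (br x z) *~ ksgn ((p + q - 1) * (p' + q' - 1)))
    &
      (forall p q p' q' x y z, H p q x -> H p' q' y -> homog z ->
         br x (y * z) = br x y * z + (y * br x z) *~ ksgn ((p + q - 1) * (p' + q')))].

Definition generates (br : A -> A -> A) (Delta : A -> A) : Prop :=
  [/\ rlinear Delta,
      (forall p q x, H p q x -> H p (q - 1) (Delta x))
    & (forall p q a b, H p q a -> homog b ->
         br a b = (Delta (a * b) - Delta a * b
                   - (a * Delta b) *~ ksgn (p + q)) *~ ksgn (p + q))].

Definition weak_bigraded_BV (br : A -> A -> A) (Delta : A -> A) : Prop :=
  [/\ bigraded_comm_algebra, gerstenhaber_bracket br & generates br Delta].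

Definition derivation_bideg10 (d : A -> A) : Prop :=
  [/\ rlinear d,
      (forall p q x, H p q x -> H (p + 1) q (d x))
    & (forall p q a b, H p q a -> homog b ->
         d (a * b) = d a * b + (a * d b) *~ ksgn (p + q))].

End BV.

(* Expanding delta (Delta (a b)) and Delta (delta (a b)) with the BV relation
   Delta (a b) = Delta a b + (-1)^|a| a Delta b + (-1)^|a| [a, b] and the Leibniz
   rule for delta, the mixed terms Delta a delta b and delta a Delta b cancel in
   the sum, leaving, for homogeneous a,
     [delta, Delta] (a b) - [delta, Delta] a b - a [delta, Delta] b
       = (-1)^|a| (delta [a, b] - [delta a, b] + (-1)^|a| [a, delta b]).
   Hence (i) and the Leibniz rule for [delta, Delta] agree on homogeneous pairs,
   and a linear operator obeying the Leibniz rule on homogeneous pairs obeys it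
   everywhere because A is spanned by homogeneous elements. *)

From mathcomp Require Import all_boot all_order all_algebra ssrAC.
Set Implicit Arguments. Unset Strict Implicit. Unset Printing Implicit Defensive.
Import GRing.Theory.
Local Open Scope ring_scope.

Lemma ksgnD1 (z : int) : ksgn (z + 1) = - ksgn z.
Proof.
rewrite /ksgn; case: z => n.
  by rewrite -PoszD addn1 exprS mulN1r.
have -> : Negz n + 1 = - n%:Z by rewrite NegzE -addn1 PoszD opprD addrK.
by rewrite abszN /= exprS mulN1r opprK.
Qed.

Lemma ksgnB1 (z : int) : ksgn (z - 1) = - ksgn z.
Proof. by rewrite -[in RHS](subrK 1 z) ksgnD1 opprK. Qed.

Lemma mulrz_ksgnK (V : zmodType) (z : int) (x : V) : x *~ ksgn z *~ ksgn z = x.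
Proof. by rewrite -mulrzA -expr2 sqrr_sign mulr1z. Qed.

Section RLinear.
Variables (R : comPzRingType) (A : lalgType R) (f : A -> A).
Hypothesis f_lin : rlinear f.

Lemma rlinear0 : f 0 = 0.
Proof.
have := f_lin 1 0 0; rewrite !scale1r addr0 => f0_double.
by apply: (addIr (f 0)); rewrite add0r -f0_double.
Qed.

Lemma rlinearZ (c : R) (u : A) : f (c *: u) = c *: f u.
Proof. by rewrite -[c *: u]addr0 f_lin rlinear0 addr0. Qed.

Lemma rlinearD : {morph f : u v / u + v}.
Proof. by move=> u v; rewrite -[u]scale1r f_lin !scale1r. Qed.

Lemma rlinearMz (u : A) (n : int) : f (u *~ n) = f u *~ n.
Proof. by rewrite -!scaler_int rlinearZ. Qed.

Lemma rlinear_sum (I : Type) (s : seq I) (F : I -> A) :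
  f (\sum_(i <- s) F i) = \sum_(i <- s) f (F i).
Proof. exact: (big_morph f rlinearD rlinear0). Qed.

End RLinear.

Definition anticomm (V : zmodType) (f g : V -> V) (z : V) := f (g z) + g (f z).

Lemma rlinear_anticomm (R : comPzRingType) (A : lalgType R) (f g : A -> A) :
  rlinear f -> rlinear g -> rlinear (anticomm f g).
Proof.
move=> f_lin g_lin c u v.
by rewrite /anticomm !(f_lin, g_lin) scalerDr addrACA.
Qed.

Section LeibnizRule.
Variables (R : comPzRingType) (A : lalgType R) (H : int -> int -> A -> Prop).
Hypothesis homog_span : forall a : A, exists s : seq ((int * int) * A),
  (forall i, i \in s -> H i.1.1 i.1.2 i.2) /\ a = \sum_(i <- s) i.2.

Lemma Leibniz_homog (D : A -> A) : rlinear D ->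
  (forall a b, homog H a -> homog H b -> D (a * b) = D a * b + a * D b) ->
  forall a b, D (a * b) = D a * b + a * D b.
Proof.
move=> D_lin D_homog.
have D_homog_l a b : homog H a -> D (a * b) = D a * b + a * D b.
  move=> Ha; have [s [Hs ->]] := homog_span b.
  rewrite !mulr_sumr !(rlinear_sum D_lin) !mulr_sumr -big_split.
  apply: eq_big_seq => j /Hs Hj; apply: D_homog => //.
  by exists j.1.1, j.1.2.
move=> a b; have [s [Hs ->]] := homog_span a.
rewrite !mulr_suml !(rlinear_sum D_lin) !mulr_suml -big_split.
apply: eq_big_seq => i /Hs Hi; apply: D_homog_l.
by exists i.1.1, i.1.2.
Qed.

End LeibnizRule.

Section DeltaAnticommutator.
Variables (R : comPzRingType) (A : lalgType R) (H : int -> int -> A -> Prop).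
Variables (br : A -> A -> A) (Delta delta : A -> A).
Hypothesis Delta_gen : generates H br Delta.
Hypothesis delta_der : derivation_bideg10 H delta.

Lemma Delta_mul p q a b : H p q a -> homog H b ->
  Delta (a * b) =
  Delta a * b + (a * Delta b) *~ ksgn (p + q) + br a b *~ ksgn (p + q).
Proof.
move=> Ha Hb; have [_ _ gen] := Delta_gen.
by rewrite (gen _ _ _ _ Ha Hb) mulrz_ksgnK addrC -[_ - _ - _]addrA -opprD subrK.
Qed.

Lemma delta_Delta_mul p q a b : H p q a -> homog H b ->
  delta (Delta (a * b)) =
  delta (Delta a) * b + a * delta (Delta b)
  + (delta a * Delta b - Delta a * delta b + delta (br a b)) *~ ksgn (p + q).
Proof.
move=> Ha Hb; have [_ Delta_deg _] := Delta_gen.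
have [delta_lin _ delta_Leibniz] := delta_der.
have HDeltab : homog H (Delta b).
  by case: Hb => p' [q' /Delta_deg]; exists p', (q' - 1).
rewrite (Delta_mul Ha Hb) !(rlinearD delta_lin, rlinearMz delta_lin).
rewrite (delta_Leibniz _ _ _ _ (Delta_deg _ _ _ Ha) Hb) addrA ksgnB1 mulrNz.
rewrite (delta_Leibniz _ _ _ _ Ha HDeltab) mulrzDl mulrz_ksgnK.
by rewrite !mulrzDl mulNrz [LHS](@GRing.add A).[AC (2*2*1) ((1*4)*(3*2*5))].
Qed.

Lemma Delta_delta_mul p q a b : H p q a -> homog H b ->
  Delta (delta (a * b)) =
  Delta (delta a) * b + a * Delta (delta b)
  + (Delta a * delta b - delta a * Delta b - br (delta a) b) *~ ksgn (p + q)
  + br a (delta b).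
Proof.
move=> Ha Hb; have [Delta_lin _ _] := Delta_gen.
have [delta_lin delta_deg delta_Leibniz] := delta_der.
have Hdeltab : homog H (delta b).
  by case: Hb => p' [q' /delta_deg]; exists (p' + 1), q'.
rewrite (delta_Leibniz _ _ _ _ Ha Hb) !(rlinearD Delta_lin, rlinearMz Delta_lin).
rewrite (Delta_mul (delta_deg _ _ _ Ha) Hb) [p + 1 + q]addrAC ksgnD1 !mulrNz.
rewrite (Delta_mul Ha Hdeltab) !mulrzDl !mulrz_ksgnK.
by rewrite !mulNrz [LHS](@GRing.add A).[AC (3*3) ((1*5)*(4*2*3)*6)].
Qed.

Lemma anticomm_mul p q a b : H p q a -> homog H b ->
  anticomm delta Delta (a * b) =
  anticomm delta Delta a * b + a * anticomm delta Delta b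
  + (delta (br a b) - br (delta a) b + br a (delta b) *~ ksgn (p + q))
    *~ ksgn (p + q).
Proof.
move=> Ha Hb; rewrite /anticomm (delta_Delta_mul Ha Hb) (Delta_delta_mul Ha Hb).
rewrite mulrDl mulrDr [LHS](@GRing.add A).[AC (3*4) ((1*4)*(2*5)*(3*6*7))].
congr (_ + _).
rewrite -mulrzDl [in RHS]mulrzDl mulrz_ksgnK; congr (_ *~ _ + _).
by rewrite (@GRing.add A).[AC (3*3) ((1*5)*(4*2)*(3*6))] !subrr !add0r.
Qed.

Lemma anticomm_mul_homogP p q a b : H p q a -> homog H b ->
  anticomm delta Delta (a * b) =
    anticomm delta Delta a * b + a * anticomm delta Delta b
  <-> delta (br a b) = br (delta a) b - br a (delta b) *~ ksgn (p + q).
Proof.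
move=> Ha Hb; rewrite (anticomm_mul Ha Hb) -[X in _ = X]addr0; split.
- move=> /addrI /(congr1 (fun x => x *~ ksgn (p + q))).
  by rewrite mulrz_ksgnK mul0rz => /eqP; rewrite addr_eq0 subr_eq addrC => /eqP.
- move=> ->; congr (_ + _).
  by rewrite [_ - _ - _]addrAC subrr add0r addNr mul0rz.
Qed.

End DeltaAnticommutator.

Theorem lemma5p4p2 (R : comPzRingType) (A : lalgType R)
    (H : int -> int -> A -> Prop) (br : A -> A -> A) (Delta delta : A -> A) :
  weak_bigraded_BV H br Delta ->
  derivation_bideg10 H delta ->
  ((forall p q x y, H p q x -> homog H y ->
      delta (br x y) = br (delta x) y - br x (delta y) *~ ksgn (p + q))
   <->
   (forall a b : A,
      let D := fun z => delta (Delta z) + Delta (delta z) in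
      D (a * b) = D a * b + a * D b)).
Proof.
move=> [[_ homog_span _ _ _] _ Delta_gen] delta_der.
have Delta_lin : rlinear Delta by case: Delta_gen.
have delta_lin : rlinear delta by case: delta_der.
split=> [delta_br | anticomm_Leibniz p q x y Hx Hy].
- apply: (Leibniz_homog homog_span (rlinear_anticomm delta_lin Delta_lin)).
  move=> a b [p [q Ha]] Hb.
  by apply/(anticomm_mul_homogP Delta_gen delta_der Ha Hb)/delta_br.
- exact/(anticomm_mul_homogP Delta_gen delta_der Hx Hy)/anticomm_Leibniz.
Qed.
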